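(* For a monoid $S$ the following are equivalent: (1) every almost pure $S$-act is absolutely pure; (2) for every $S$-act $A$, the $S$-act $A(1)$ is absolutely pure; (3) for every $S$-act $A$ which is a finitely generated subact of a finitely presented $S$-act, $A(1)$ is absolutely pure; (4) for every $S$-act $A$, $A(1)$ is a retract of $A(\aleph_0)$; (5) for every $S$-act $A$ which is a finitely generated subact of a finitely presented $S$-act, $A(1)$ is a retract of $A(\aleph_0)$.
   Context: A (right) $S$-act is a set with an action $(a,s)\mapsto as$ with $a1=a$, $a(st)=(as)t$. An $S$-act is finitely generated if it is a union of finitely many subacts $aS$, and finitely presented if it is isomorphic to $F_S(X)/\rho$ with $F_S(X)$ the free $S$-act on a finite set $X$ and $\rho$ a finitely generated congruence. Equations over $A$ have the forms $xs=yt$, $xs=xt$, $xs=a$ ($a\in A$); a set of them is consistent if it has a solution in some $S$-act containing $A$. $A$ is almost pure if every finite consistent set of equations over $A$ in one variable has a solution in $A$, absolutely pure if every finite consistent set of equations over $A$ has a solution in $A$; a subact $C\subseteq D$ is a retract of $D$ if some $S$-morphism $D\to C$ fixes $C$ pointwise. For a set $\Sigma$ of equations, $v(\Sigma)$ is the number of variables occurring, $H(\Sigma)=\{(xu,yv):xu=yv\in\Sigma\}$, $K(\Sigma)=\{(xs,a):xs=a\in\Sigma\}$. For an $S$-act $C$: $\Theta(C,m)$ is the collection of all finite consistent sets $\Sigma$ over $C$ with $v(\Sigma)=m$, variables chosen so that distinct sets and distinct stages of the construction use pairwise disjoint fresh variables; $\Omega_n$ is the set of variables of members of $\bigcup_{m\le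 n}\Theta(C,m)$, $\Omega_{\aleph_0}=\bigcup_n\Omega_n$; $C^n_1=(C\sqcup F_S(\Omega_n))/\kappa(n)$ where $\kappa(n)$ is the congruence generated by $\bigcup\{H(\Sigma)\cup K(\Sigma):\Sigma\in\Theta(C,m),m\le n\}$, and $C^{\aleph_0}_1$ likewise using all $m$; $C$ embeds in these via $c\mapsto[c]$. Set $A^n_0=A^{\aleph_0}_0=A$, $A^n_i=(A^n_{i-1})^n_1$, $A^{\aleph_0}_i=(A^{\aleph_0}_{i-1})^{\aleph_0}_1$, $A(n)=\bigcup_iA^n_i$, $A(\aleph_0)=\bigcup_iA^{\aleph_0}_i$. With the compatible choice of variables, $A(1)\subseteq A(\aleph_0)$ as a subact (indeed $A(\aleph_0)$ is obtained from $A(1)$ by successively adjoining solutions of finite consistent systems). *)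

From Stdlib Require Import ClassicalEpsilon List PeanoNat.
Set Implicit Arguments.
Unset Strict Implicit.

Record monoid := Monoid {
  mcar :> Type;
  mmul : mcar -> mcar -> mcar;
  mone : mcar;
  massoc : forall a b c, mmul a (mmul b c) = mmul (mmul a b) c;
  mone_l : forall a, mmul mone a = a;
  mone_r : forall a, mmul a mone = a }.
Arguments mmul : clear implicits.
Arguments mone : clear implicits.

Record preact (M : monoid) := PreAct {
  acar :> Type;
  aact : acar -> M -> acar }.
Arguments PreAct {M} acar aact.
Arguments aact {M} _ _ _.

Definition is_act (M : monoid) (A : preact M) : Prop :=
  (forall a, aact A a (mone M) = a) /\
  (forall a s t, aact A a (mmul M s t) = aact A (aact A a s) t).

Definition is_morph (M : monoid) (A B : preact M) (f : A -> B) : Prop :=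
  forall a s, f (aact A a s) = aact B (f a) s.

Definition injective (X Y : Type) (f : X -> Y) : Prop :=
  forall a b, f a = f b -> a = b.

Inductive eqn (M : monoid) (V C : Type) : Type :=
  | EqVV (x : V) (s : M) (y : V) (t : M)
  | EqVC (x : V) (s : M) (c : C).
Arguments EqVV {M V C} x s y t.
Arguments EqVC {M V C} x s c.

Definition system (M : monoid) (V C : Type) := eqn M V C -> Prop.

Definition finite_sys (M : monoid) (V C : Type) (Sg : system M V C) : Prop :=
  exists l : list (eqn M V C), forall q, Sg q <-> In q l.

Definition sat_eqn (M : monoid) (V : Type) (C D : preact M) (e : C -> D)
  (f : V -> D) (q : eqn M V C) : Prop :=
  match q with
  | EqVV x s y t => aact D (f x) s = aact D (f y) t
  | EqVC x s c => aact D (f x) s = e c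
  end.

Definition solves (M : monoid) (V : Type) (C D : preact M) (e : C -> D)
  (f : V -> D) (Sg : system M V C) : Prop :=
  forall q, Sg q -> sat_eqn e f q.

Definition consistent (M : monoid) (V : Type) (C : preact M)
  (Sg : system M V C) : Prop :=
  exists D : preact M, is_act D /\
  exists e : C -> D, injective e /\ is_morph e /\
  exists f : V -> D, solves e f Sg.

Definition almost_pure (M : monoid) (C : preact M) : Prop :=
  forall Sg : system M unit C, finite_sys Sg -> consistent Sg ->
  exists f : unit -> C, solves (fun c => c) f Sg.

Definition abs_pure (M : monoid) (C : preact M) : Prop :=
  forall Sg : system M nat C, finite_sys Sg -> consistent Sg ->
  exists f : nat -> C, solves (fun c => c) f Sg.

Definition fin_gen (M : monoid) (C : preact M) : Prop :=
  exists l : list C, forall c, exists g s, In g l /\ c = aact C g s.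

Inductive cg (M : monoid) (X : preact M) (R : X -> X -> Prop) : X -> X -> Prop :=
  | cg_base x y s : R x y -> cg R (aact X x s) (aact X y s)
  | cg_refl x : cg R x x
  | cg_sym x y : cg R x y -> cg R y x
  | cg_trans x y z : cg R x y -> cg R y z -> cg R x z.

Definition free_fin (M : monoid) (n : nat) : preact M :=
  PreAct ({i : nat | i < n} * M)%type (fun p s => (fst p, mmul M (snd p) s)).

(** Finitely presented: P is isomorphic to F_S(X)/rho, X finite and rho generated
    by a finite set of pairs; expressed as: the morphism F_S(X) -> P,
    (i,u) |-> g_i u, is onto and its kernel is exactly rho. *)
Definition fin_pres (M : monoid) (P : preact M) : Prop :=
  exists (n : nat) (g : {i : nat | i < n} -> P)
         (R : list (free_fin M n * free_fin M n)),
    let pi := fun x : free_fin M n => aact P (g (fst x)) (snd x) in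
    (forall p, exists x, p = pi x) /\
    (forall x y, pi x = pi y <-> cg (fun a b => In (a, b) R) x y).

Definition fg_sub_fp (M : monoid) (A : preact M) : Prop :=
  fin_gen A /\
  exists P : preact M, is_act P /\ fin_pres P /\
  exists e : A -> P, injective e /\ is_morph e.

Definition Quot (X : Type) (E : X -> X -> Prop) :=
  { P : X -> Prop | exists x, P = E x }.
Definition qcls (X : Type) (E : X -> X -> Prop) (x : X) : Quot E :=
  exist _ (E x) (ex_intro _ x eq_refl).
Definition qrep (X : Type) (E : X -> X -> Prop) (P : Quot E) : X :=
  proj1_sig (constructive_indefinite_description _ (proj2_sig P)).
Definition quot_preact (M : monoid) (X : preact M) (E : X -> X -> Prop)
  : preact M :=
  PreAct (Quot E) (fun P s => qcls E (aact X (qrep P) s)).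

Definition occurs (M : monoid) (C : Type) (x : nat) (q : eqn M nat C) : Prop :=
  match q with
  | EqVV y _ z _ => x = y \/ x = z
  | EqVC y _ _ => x = y
  end.
Definition occurs_in (M : monoid) (C : Type) (x : nat) (Sg : system M nat C) :=
  exists q, Sg q /\ occurs x q.

(** Bound on the number of variables: [Some n] = at most n, [None] = aleph_0.
    Systems are taken with variable set exactly {0,...,m-1}, m = v(Sg). *)
Definition admissible (M : monoid) (C : Type) (n : option nat)
  (Sg : system M nat C) : Prop :=
  exists m, match n with None => True | Some k => m <= k end /\
            (forall x, occurs_in x Sg <-> x < m).

(** Generators of F_S(Omega_n): pairs (Sigma, variable of Sigma), Sigma a finite
    consistent system over C with v(Sigma) <= n. *)
Definition Gen (M : monoid) (n : option nat) (C : preact M) :=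
  { p : system M nat C * nat |
      finite_sys (fst p) /\ consistent (fst p) /\ admissible n (fst p) /\
      occurs_in (snd p) (fst p) }.

Definition pre (M : monoid) (n : option nat) (C : preact M) : preact M :=
  PreAct (C + (Gen n C * M))%type
   (fun u s => match u with
               | inl c => inl (aact C c s)
               | inr (g, v) => inr (g, mmul M v s)
               end).

Inductive kbase (M : monoid) (n : option nat) (C : preact M)
  : pre n C -> pre n C -> Prop :=
  | kb_VV (g1 g2 : Gen n C) s t :
      fst (proj1_sig g1) = fst (proj1_sig g2) ->
      fst (proj1_sig g1) (EqVV (snd (proj1_sig g1)) s (snd (proj1_sig g2)) t) ->
      kbase (inr (g1, s)) (inr (g2, t))
  | kb_VC (g : Gen n C) s c :
      fst (proj1_sig g) (EqVC (snd (proj1_sig g)) s c) ->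
      kbase (inr (g, s)) (inl c).

Definition step (M : monoid) (n : option nat) (C : preact M) : preact M :=
  quot_preact (cg (@kbase M n C)).
Definition step_emb (M : monoid) (n : option nat) (C : preact M) (c : C)
  : step n C := qcls _ (inl c : pre n C).

Fixpoint stage (M : monoid) (n : option nat) (A : preact M) (i : nat)
  : preact M :=
  match i with
  | 0 => A
  | S j => step n (stage n A j)
  end.

Fixpoint liftd (M : monoid) (n : option nat) (A : preact M) (i d : nat)
  : stage n A i -> stage n A (d + i) :=
  match d as d return stage n A i -> stage n A (d + i) with
  | 0 => fun a => a
  | S d' => fun a => @step_emb M n (stage n A (d' + i)) (@liftd M n A i d' a)
  end.

Definition tot (M : monoid) (n : option nat) (A : preact M) : preact M :=
  PreAct {i : nat & stage n A i}
   (fun x s => existT _ (projT1 x) (aact (stage n A (projT1 x)) (projT2 x) s)).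

Definition shift (M : monoid) (n : option nat) (A : preact M) (d : nat)
  (x : tot n A) : tot n A :=
  existT _ (d + projT1 x) (@liftd M n A (projT1 x) d (projT2 x)).

Definition Eunion (M : monoid) (n : option nat) (A : preact M)
  (x y : tot n A) : Prop :=
  exists d1 d2, shift d1 x = shift d2 y.

(** A(n) = union of the chain A^n_0 <= A^n_1 <= ... (directed colimit). *)
Definition Aclos (M : monoid) (n : option nat) (A : preact M) : preact M :=
  quot_preact (@Eunion M n A).

Definition A1 (M : monoid) (A : preact M) := Aclos (Some 1) A.
Definition Aaleph0 (M : monoid) (A : preact M) := Aclos None A.

(** The canonical inclusion A(1) <= A(aleph_0) (compatible choice of variables),
    given by its graph, built stage by stage. *)
Definition eqn_rel (M : monoid) (C1 C2 : Type) (R : C1 -> C2 -> Prop)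
  (q : eqn M nat C1) (q' : eqn M nat C2) : Prop :=
  match q, q' with
  | EqVV x s y t, EqVV x' s' y' t' => x = x' /\ s = s' /\ y = y' /\ t = t'
  | EqVC x s c, EqVC x' s' c' => x = x' /\ s = s' /\ R c c'
  | _, _ => False
  end.

Definition Jpre (M : monoid) (C1 C2 : preact M) (R : C1 -> C2 -> Prop)
  (u : pre (Some 1) C1) (w : pre None C2) : Prop :=
  match u, w with
  | inl c, inl c' => R c c'
  | inr (g, s), inr (g', s') =>
      s = s' /\ snd (proj1_sig g) = snd (proj1_sig g') /\
      (forall q', fst (proj1_sig g') q' <->
                  exists q, fst (proj1_sig g) q /\ eqn_rel R q q')
  | _, _ => False
  end.

Fixpoint Jst (M : monoid) (A : preact M) (i : nat)
  : stage (Some 1) A i -> stage None A i -> Prop :=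
  match i as i return stage (Some 1) A i -> stage None A i -> Prop with
  | 0 => fun a b => a = b
  | S j => fun P Q =>
      exists (x : pre (Some 1) (stage (Some 1) A j))
             (y : pre None (stage None A j)),
        P = qcls _ x /\ Q = qcls _ y /\ Jpre (@Jst M A j) x y
  end.

Definition Jincl (M : monoid) (A : preact M) (x : A1 A) (y : Aaleph0 A) : Prop :=
  exists i (a : stage (Some 1) A i) (b : stage None A i),
    Jst a b /\ x = qcls _ (existT _ i a : tot (Some 1) A) /\
    y = qcls _ (existT _ i b : tot None A).

Definition A1_retract (M : monoid) (A : preact M) : Prop :=
  exists r : Aaleph0 A -> A1 A, is_morph r /\
    (forall x y, Jincl x y -> r y = x).

(** Every act [A] embeds in [A(1)], which is always almost pure, and in
    [A(aleph_0)], which is always absolutely pure: a finite consistent system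
    over [A(n)] has its constants in some stage [A^n_i], and [A^n_{i+1}]
    adjoins a solution of it.  This gives (1) => (2), and (5) => (3) since a
    retract of an absolutely pure act is absolutely pure.  A morphism from [A]
    to an almost pure act [C] extends to [A(1)], stage by stage, by solving in
    [C] the one-variable systems that [A(1)] adjoins.  In the same way, if
    [A(1)] is absolutely pure, the identity of [A(1)] extends to a retraction
    [A(aleph_0) -> A(1)]: a system coming from [A(1)] is sent to its solution
    adjoined in [A(1)], any other one is solved in [A(1)]; this is (2) => (4).
    For (3) => (1), a finite consistent system over an almost pure [C] is
    encoded as a finitely presented act whose generators are its equations and
    its variables; the subact generated by the equations [x s = c] maps to [C],
    the map extends to [A(1)], and a solution in the absolutely pure [A(1)]
    is pushed down to [C]. *)
From Stdlib Require Import ClassicalEpsilon FunctionalExtensionality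
  PropExtensionality ProofIrrelevance List PeanoNat Lia Eqdep_dec.
Set Implicit Arguments.
Unset Strict Implicit.

Lemma subset_eq (T : Type) (P : T -> Prop) (a b : {x : T | P x}) :
  proj1_sig a = proj1_sig b -> a = b.
Proof. apply eq_sig_hprop. intros; apply proof_irrelevance. Qed.

Section Quotients.
Variable M : monoid.

Definition is_equiv (X : Type) (E : X -> X -> Prop) : Prop :=
  (forall x, E x x) /\ (forall x y, E x y -> E y x) /\
  (forall x y z, E x y -> E y z -> E x z).

Definition is_congr (X : preact M) (E : X -> X -> Prop) : Prop :=
  forall x y s, E x y -> E (aact X x s) (aact X y s).

Section Quot.
Variables (X : Type) (E : X -> X -> Prop).

Lemma qcls_qrep (P : Quot E) : qcls E (qrep P) = P.
Proof.
  destruct P as [p H]. unfold qcls, qrep; simpl.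
  destruct (constructive_indefinite_description _ H) as [x ->]; simpl.
  f_equal. apply proof_irrelevance.
Qed.

Lemma quot_ind (Pr : Quot E -> Prop) : (forall x, Pr (qcls E x)) -> forall P, Pr P.
Proof. intros H P. rewrite <- (qcls_qrep P). apply H. Qed.

Hypothesis HE : is_equiv E.

Lemma qcls_eq x y : E x y -> qcls E x = qcls E y.
Proof.
  destruct HE as [_ [Hs Ht]]. intro H. apply subset_eq; simpl.
  apply functional_extensionality; intro z.
  apply propositional_extensionality; split; eauto.
Qed.

Lemma qcls_rel x y : qcls E x = qcls E y -> E x y.
Proof.
  intro H. apply (f_equal (@proj1_sig _ _)) in H. simpl in H.
  rewrite H. apply (proj1 HE).
Qed.

Lemma qrep_qcls x : E (qrep (qcls E x)) x.
Proof. apply qcls_rel, qcls_qrep. Qed.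

Definition qlift (Y : Type) (f : X -> Y) (P : Quot E) : Y := f (qrep P).

Lemma qlift_qcls (Y : Type) (f : X -> Y) :
  (forall x y, E x y -> f x = f y) -> forall x, qlift f (qcls E x) = f x.
Proof. intros Hf x. apply Hf, qrep_qcls. Qed.

End Quot.

Section QuotAct.
Variables (X : preact M) (E : X -> X -> Prop).
Hypotheses (HE : is_equiv E) (HC : is_congr E).

Lemma quot_act x s : aact (quot_preact E) (qcls E x) s = qcls E (aact X x s).
Proof. apply qcls_eq, HC, qrep_qcls; auto. Qed.

Lemma quot_is_act : is_act X -> is_act (quot_preact E).
Proof.
  intros [H1 H2]. split.
  - apply quot_ind; intro x. rewrite quot_act, H1; auto.
  - intros P s t. pattern P; apply quot_ind; intro x.
    rewrite !quot_act, H2; auto.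
Qed.

Lemma qlift_morph (Y : preact M) (f : X -> Y) :
  (forall x y, E x y -> f x = f y) -> is_morph f ->
  is_morph (A := quot_preact E) (qlift f).
Proof.
  intros Hf Hm P s. pattern P; apply quot_ind; intro x.
  rewrite quot_act, !qlift_qcls; auto.
Qed.

End QuotAct.

Section Congruence.
Variable X : preact M.
Variable R : X -> X -> Prop.

Lemma cg_equiv : is_equiv (cg R).
Proof. split; [|split]; intros; eauto using cg_refl, cg_sym, cg_trans. Qed.

Hypothesis HX : is_act X.

Lemma cg_congr : is_congr (cg R).
Proof.
  destruct HX as [_ H2]. intros x y s H. induction H.
  - rewrite <- !H2. apply cg_base; auto.
  - apply cg_refl.
  - apply cg_sym; auto.
  - eapply cg_trans; eauto.
Qed.

Lemma cg_incl x y : R x y -> cg R x y.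
Proof.
  destruct HX as [H1 _]. intro H. rewrite <- (H1 x), <- (H1 y). apply cg_base; auto.
Qed.

Lemma cg_ind_morph (Y : preact M) (f : X -> Y) :
  is_morph f -> (forall x y, R x y -> f x = f y) -> forall x y, cg R x y -> f x = f y.
Proof.
  intros Hf HR x y H. induction H; [rewrite !Hf; f_equal|..]; auto; congruence.
Qed.

End Congruence.

Lemma cg_image (X : preact M) (R : X -> X -> Prop) (Y : preact M) (R' : Y -> Y -> Prop)
  (f : X -> Y) :
  is_act Y -> is_morph f -> (forall x y, R x y -> cg R' (f x) (f y)) ->
  forall x y, cg R x y -> cg R' (f x) (f y).
Proof.
  intros HY Hf HR x y H. induction H.
  - rewrite !Hf. apply cg_congr; auto.
  - apply cg_refl.
  - apply cg_sym; auto.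
  - eapply cg_trans; eauto.
Qed.
End Quotients.

Section Systems.
Variable M : monoid.

Definition emap (V1 V2 C1 C2 : Type) (rho : V1 -> V2) (h : C1 -> C2)
  (q : eqn M V1 C1) : eqn M V2 C2 :=
  match q with
  | EqVV x s y t => EqVV (rho x) s (rho y) t
  | EqVC x s c => EqVC (rho x) s (h c)
  end.

Definition sysmap (V1 V2 C1 C2 : Type) (rho : V1 -> V2) (h : C1 -> C2)
  (Sg : system M V1 C1) : system M V2 C2 :=
  fun q' => exists q, Sg q /\ q' = emap rho h q.

Lemma solves_sysmap (V1 V2 : Type) (C1 C2 D : preact M) (rho : V1 -> V2)
  (h : C1 -> C2) (e : C2 -> D) (f : V2 -> D) Sg :
  solves e f (sysmap rho h Sg) <-> solves (fun c => e (h c)) (fun x => f (rho x)) Sg.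
Proof.
  split.
  - intros H q Hq. specialize (H _ (ex_intro _ q (conj Hq eq_refl))).
    destruct q; exact H.
  - intros H q' [q [Hq ->]]. specialize (H q Hq). destruct q; exact H.
Qed.

Lemma finite_sysmap (V1 V2 C1 C2 : Type) (rho : V1 -> V2) (h : C1 -> C2)
  (Sg : system M V1 C1) : finite_sys Sg -> finite_sys (sysmap rho h Sg).
Proof.
  intros [l Hl]. exists (map (emap rho h) l). intro q'. rewrite in_map_iff. split.
  - intros [q [Hq ->]]. exists q; split; auto. apply Hl; auto.
  - intros [q [<- Hq]]. exists q; split; auto. apply Hl; auto.
Qed.

Lemma solves_morph (V : Type) (C D D' : preact M) (e : C -> D) (g : D -> D')
  (f : V -> D) Sg :
  is_morph g -> solves e f Sg -> solves (fun c => g (e c)) (fun x => g (f x)) Sg.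
Proof.
  intros Hg H q Hq. specialize (H q Hq).
  destruct q; simpl in *; rewrite <- !Hg; congruence.
Qed.

Lemma occurs_in_sysmap (C1 C2 : Type) (h : C1 -> C2) x (Sg : system M nat C1) :
  occurs_in x (sysmap (fun y => y) h Sg) <-> occurs_in x Sg.
Proof.
  split.
  - intros [q' [[q [Hq ->]] Ho]]. exists q. split; auto. destruct q; exact Ho.
  - intros [q [Hq Ho]]. exists (emap (fun y => y) h q).
    split; [exists q; auto|destruct q; exact Ho].
Qed.

Lemma sat_ext (C D : preact M) (e : C -> D) (f f' : nat -> D) (q : eqn M nat C) :
  (forall x, occurs x q -> f x = f' x) -> sat_eqn e f q -> sat_eqn e f' q.
Proof. intro H. destruct q; simpl in *; rewrite <- ?H; auto. Qed.

(* The pushout of an embedding [e : C -> D] along [h : C -> C']: the points of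
   [D] outside [e C] are adjoined to [C'] and act as in [D] until they fall
   into [e C]. *)
Section Pushout.
Variables (C C' D : preact M) (h : C -> C') (e : C -> D).
Hypotheses (HC' : is_act C') (HD : is_act D) (Hh : is_morph h)
  (He : injective e) (Hem : is_morph e).

Definition outside := {d : D | ~ exists c, e c = d}.

Definition push (d : D) : C' + outside :=
  match excluded_middle_informative (exists c, e c = d) with
  | left H => inl (h (proj1_sig (constructive_indefinite_description _ H)))
  | right H => inr (exist _ d H)
  end.

Definition pushout : preact M := PreAct (C' + outside)%type
  (fun u s => match u with
              | inl c => inl (aact C' c s)
              | inr d => push (aact D (proj1_sig d) s)
              end).

Lemma push_emb c : push (e c) = inl (h c).
Proof.
  unfold push. destruct (excluded_middle_informative _) as [H|H].
  - destruct (constructive_indefinite_description _ H) as [c' Hc']; simpl.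
    apply He in Hc'. subst; auto.
  - exfalso; eauto.
Qed.

Lemma push_outside d (H : ~ exists c, e c = d) : push d = inr (exist _ d H).
Proof.
  unfold push. destruct (excluded_middle_informative _) as [H'|H']; [contradiction|].
  f_equal. apply subset_eq. reflexivity.
Qed.

Lemma push_morph : is_morph (B := pushout) push.
Proof.
  intros d s. destruct (classic (exists c, e c = d)) as [[c <-]|H].
  - rewrite <- Hem, !push_emb. simpl. rewrite Hh. reflexivity.
  - rewrite (push_outside H). reflexivity.
Qed.

Lemma pushout_act : is_act pushout.
Proof.
  destruct HC' as [H1 H2], HD as [D1 D2]. split.
  - intros [c|[d H]]; simpl; [rewrite H1|rewrite D1; apply push_outside]; auto.
  - intros [c|[d H]] s t; simpl; [rewrite H2; auto|rewrite D2; apply push_morph].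
Qed.

End Pushout.

Lemma consistent_sysmap (V : Type) (C C' : preact M) (h : C -> C') (Sg : system M V C) :
  is_act C' -> is_morph h -> consistent Sg -> consistent (sysmap (fun x => x) h Sg).
Proof.
  intros HC' Hh [D [HD [e [He [Hem [f Hf]]]]]].
  exists (pushout h e). split; [apply pushout_act; auto|].
  exists inl. split; [intros a b H; injection H; auto|].
  split; [intros c s; reflexivity|].
  exists (fun x => push h e (f x)). apply solves_sysmap.
  intros q Hq. pose proof (solves_morph (push_morph Hh He Hem) Hf Hq) as H.
  destruct q; simpl in *; rewrite ?push_emb in H; auto.
Qed.

End Systems.

Section Steps.
Variable M : monoid.

Lemma pre_act (n : option nat) (C : preact M) : is_act C -> is_act (pre n C).
Proof.
  intros [H1 H2]. split.
  - intros [c|[g v]]; simpl; [rewrite H1|rewrite mone_r]; auto.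
  - intros [c|[g v]] s t; simpl; [rewrite H2|rewrite massoc]; auto.
Qed.

Variables (n : option nat) (C : preact M).

Lemma kappa_equiv : is_equiv (cg (@kbase M n C)).
Proof. apply cg_equiv. Qed.

Hypothesis HC : is_act C.

Lemma kappa_congr : is_congr (cg (@kbase M n C)).
Proof. apply cg_congr, pre_act, HC. Qed.

Lemma step_act : is_act (step n C).
Proof. apply quot_is_act; auto using kappa_equiv, kappa_congr, pre_act. Qed.

Lemma step_qact u s : aact (step n C) (qcls _ u) s = qcls _ (aact (pre n C) u s).
Proof. apply quot_act; auto using kappa_equiv, kappa_congr. Qed.

Lemma step_emb_morph : is_morph (@step_emb M n C).
Proof. intros c s. symmetry; apply step_qact. Qed.

Lemma kbase_qcls u v : kbase u v -> qcls (cg (@kbase M n C)) u = qcls _ v.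
Proof. intro H. apply qcls_eq, cg_incl; auto using kappa_equiv, pre_act. Qed.

Definition gen_cls (g : Gen n C) (s : M) : step n C := qcls _ (inr (g, s) : pre n C).

Lemma gen_cls_act (g : Gen n C) u s :
  aact (step n C) (gen_cls g u) s = gen_cls g (mmul M u s).
Proof. apply step_qact. Qed.

Definition pre_eval (E : preact M) (e : C -> E) (sol : system M nat C -> nat -> E)
  (u : pre n C) : E :=
  match u with
  | inl c => e c
  | inr (g, s) => aact E (sol (fst (proj1_sig g)) (snd (proj1_sig g))) s
  end.

Lemma pre_eval_morph (E : preact M) (e : C -> E) sol :
  is_act E -> is_morph e -> is_morph (A := pre n C) (pre_eval e sol).
Proof. intros [_ H2] He [c|[g v]] s; simpl; auto. Qed.

Lemma kappa_finite_support u v : cg (@kbase M n C) u v ->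
  exists L : list (Gen n C), forall (E : preact M) (e : C -> E) sol,
    is_act E -> is_morph e ->
    (forall g, In g L -> solves e (sol (fst (proj1_sig g))) (fst (proj1_sig g))) ->
    pre_eval e sol u = pre_eval e sol v.
Proof.
  intro H. induction H as [x y s Hk| | |x y z _ [L1 HL1] _ [L2 HL2]].
  - destruct Hk as [g1 g2 s1 t1 Heq Hin|g s1 c Hin];
      [exists (g1 :: nil)|exists (g :: nil)];
      intros E e sol HE He Hs; rewrite !pre_eval_morph; auto; f_equal;
      specialize (Hs _ (or_introl eq_refl) _ Hin); simpl in *; [rewrite <- Heq|]; exact Hs.
  - exists nil. reflexivity.
  - destruct IHcg as [L HL]. exists L. intros. symmetry; eauto.
  - exists (L1 ++ L2). intros E e sol HE He Hs.
    rewrite (HL1 E e sol); auto; [apply HL2|]; auto;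
      intros; apply Hs, in_or_app; auto.
Qed.

Section StepLift.
Variables (E : preact M) (e : C -> E) (sol : system M nat C -> nat -> E).
Hypotheses (HE : is_act E) (He : is_morph e)
  (Hsol : forall g : Gen n C, solves e (sol (fst (proj1_sig g))) (fst (proj1_sig g))).

Definition step_lift : step n C -> E := qlift (pre_eval e sol).

Lemma pre_eval_resp u v : cg (@kbase M n C) u v -> pre_eval e sol u = pre_eval e sol v.
Proof. intro H. destruct (kappa_finite_support H) as [L HL]. apply HL; auto. Qed.

Lemma step_lift_qcls u : step_lift (qcls _ u) = pre_eval e sol u.
Proof. apply qlift_qcls; auto using kappa_equiv, pre_eval_resp. Qed.

Lemma step_lift_morph : is_morph step_lift.
Proof.
  apply qlift_morph; auto using kappa_equiv, kappa_congr, pre_eval_resp, pre_eval_morph.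
Qed.

Lemma step_lift_emb c : step_lift (step_emb n c) = e c.
Proof. apply step_lift_qcls. Qed.

End StepLift.
End Steps.

Section Injectivity.
Variable M : monoid.

Definition add_point (C : preact M) : preact M :=
  PreAct (option C) (fun o s => match o with Some a => Some (aact C a s) | None => None end).

Lemma add_point_act (C : preact M) : is_act C -> is_act (add_point C).
Proof.
  intros [H1 H2]; split.
  - intros [a|]; simpl; rewrite ?H1; auto.
  - intros [a|] s t; simpl; rewrite ?H2; auto.
Qed.

Lemma add_point_emb (C : preact M) :
  injective (Y := add_point C) Some /\ is_morph (B := add_point C) Some.
Proof. split; [intros a b H; injection H; auto|intros a s; reflexivity]. Qed.

Lemma consistent_joint (C : preact M) (L : list (system M nat C)) : is_act C ->
  (forall Sg, In Sg L -> consistent Sg) ->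
  exists (E : preact M) (e : C -> E) (sol : system M nat C -> nat -> E),
    is_act E /\ injective e /\ is_morph e /\ forall Sg, In Sg L -> solves e (sol Sg) Sg.
Proof.
  intro HC. induction L as [|Sg L IH]; intro Hc.
  - exists (add_point C), Some, (fun _ _ => None).
    destruct (add_point_emb C). split; [apply add_point_act; auto|].
    split; [|split]; auto. intros Sg [].
  - destruct IH as [E' [e' [sol' [HE' [He' [Hem' Hs']]]]]]; [intros; apply Hc; simpl; auto|].
    destruct (consistent_sysmap HE' Hem' (Hc Sg (or_introl eq_refl)))
      as [D [HD [e'' [He'' [Hem'' [f Hf]]]]]].
    exists D, (fun c => e'' (e' c)),
      (fun S0 => if excluded_middle_informative (S0 = Sg) then f
                 else fun x => e'' (sol' S0 x)).
    split; auto. split; [intros a b H; auto|].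
    split; [intros a s; rewrite Hem', Hem''; auto|].
    intros S0 HS0. destruct (excluded_middle_informative (S0 = Sg)) as [->|Hne].
    + exact (proj1 (solves_sysmap _ _ _ _ _) Hf).
    + destruct HS0 as [->|HS0]; [congruence|]. apply solves_morph; auto.
Qed.

Lemma step_emb_inj (n : option nat) (C : preact M) : is_act C -> injective (@step_emb M n C).
Proof.
  intros HC c c' H. apply qcls_rel in H; [|apply kappa_equiv].
  destruct (kappa_finite_support H) as [L HL].
  destruct (@consistent_joint C (map (fun g : Gen n C => fst (proj1_sig g)) L) HC)
    as [E [e [sol [HE [He [Hem Hs]]]]]].
  { intros Sg HSg. apply in_map_iff in HSg. destruct HSg as [g [<- _]].
    exact (proj1 (proj2 (proj2_sig g))). }
  apply He, (HL E e sol HE Hem). intros g Hg. apply Hs, in_map_iff. eauto.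
Qed.

End Injectivity.

Section Colimit.
Variables (M : monoid) (n : option nat) (A : preact M).
Hypothesis HA : is_act A.

Lemma stage_act j : is_act (stage n A j).
Proof. induction j; simpl; auto using step_act. Qed.

Lemma liftd_act i d (a : stage n A i) s : liftd d (aact _ a s) = aact _ (liftd d a) s.
Proof. induction d; simpl; auto. rewrite IHd. apply step_emb_morph, stage_act. Qed.

Lemma liftd_inj i d : injective (@liftd M n A i d).
Proof.
  induction d; simpl; intros a b H; auto.
  apply IHd. apply step_emb_inj in H; auto. apply stage_act.
Qed.

Lemma shift_shift a b (x : tot n A) : shift a (shift b x) = shift (a + b) x.
Proof.
  destruct x as [i u]. unfold shift; simpl.
  induction a as [|a IH]; simpl; auto.
  exact (f_equal (fun p => existT (fun k => stage n A k) (S (projT1 p))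
                             (step_emb n (projT2 p))) IH).
Qed.

Lemma Eunion_equiv : is_equiv (@Eunion M n A).
Proof.
  split; [|split].
  - intro x. exists 0, 0. reflexivity.
  - intros x y [d1 [d2 H]]. exists d2, d1. auto.
  - intros x y z [d1 [d2 H1]] [d3 [d4 H2]]. exists (d3 + d1), (d2 + d4).
    rewrite <- shift_shift, H1, shift_shift, Nat.add_comm, <- shift_shift, H2, shift_shift.
    reflexivity.
Qed.

Lemma shift_act d (x : tot n A) s :
  shift d (aact (tot n A) x s) = aact (tot n A) (shift d x) s.
Proof. destruct x as [i a]. unfold shift; simpl. rewrite liftd_act. reflexivity. Qed.

Lemma Eunion_congr : is_congr (@Eunion M n A).
Proof. intros x y s [d1 [d2 H]]. exists d1, d2. rewrite !shift_act, H. reflexivity. Qed.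

Lemma tot_act : is_act (tot n A).
Proof.
  split.
  - intros [i a]. simpl. rewrite (proj1 (stage_act i)). reflexivity.
  - intros [i a] s t. simpl. rewrite (proj2 (stage_act i)). reflexivity.
Qed.

Lemma Aclos_act : is_act (Aclos n A).
Proof. apply quot_is_act; auto using Eunion_equiv, Eunion_congr, tot_act. Qed.

Definition emb j (a : stage n A j) : Aclos n A :=
  qcls (@Eunion M n A) (existT (fun k => stage n A k) j a).

Lemma emb_morph j : is_morph (@emb j).
Proof. intros a s. symmetry. apply quot_act; auto using Eunion_equiv, Eunion_congr. Qed.

Lemma emb_liftd i d (a : stage n A i) : emb (liftd d a) = emb a.
Proof. apply qcls_eq; [apply Eunion_equiv|]. exists 0, d. reflexivity. Qed.

Lemma emb_step j (a : stage n A j) : emb (j := S j) (step_emb n a) = emb a.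
Proof. apply (emb_liftd 1 a). Qed.

Lemma emb_inj j : injective (@emb j).
Proof.
  intros a b H. apply qcls_rel in H; [|apply Eunion_equiv].
  destruct H as [d1 [d2 H]]. unfold shift in H; simpl in H.
  assert (d1 = d2) by (apply (f_equal (@projT1 _ _)) in H; simpl in H; lia). subst d2.
  apply inj_pair2_eq_dec in H; [|exact Nat.eq_dec].
  eapply liftd_inj; eauto.
Qed.

Lemma Aclos_surj (P : Aclos n A) : exists j a, P = emb (j := j) a.
Proof.
  rewrite <- (qcls_qrep P). destruct (qrep P) as [j a]. exists j, a. reflexivity.
Qed.

Lemma emb_from (P : Aclos n A) :
  exists i, forall N, i <= N -> exists b : stage n A N, P = emb b.
Proof.
  destruct (Aclos_surj P) as [i [a ->]]. exists i. intros N HN.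
  destruct (Nat.le_exists_sub i N HN) as [d [-> _]].
  exists (liftd d a). symmetry; apply emb_liftd.
Qed.

Lemma emb_common_stage (l : list (Aclos n A)) :
  exists N, forall c, In c l -> exists b : stage n A N, c = emb b.
Proof.
  assert (exists N, forall N', N <= N' -> forall c, In c l -> exists b : stage n A N', c = emb b)
    as [N HN].
  { induction l as [|c l [N IH]]; [exists 0; intros N' _ c []|].
    destruct (emb_from c) as [i Hi]. exists (Nat.max i N).
    intros N' HN c' [<-|Hc']; [apply Hi|apply IH; auto]; lia. }
  exists N. apply HN; auto.
Qed.

Section Lift.
Variables (C : preact M) (F : forall j, stage n A j -> C).
Hypotheses (HF : forall j (b : stage n A j), @F (S j) (step_emb n b) = F b)
  (HFm : forall j, is_morph (@F j)).

Definition tot_lift (x : tot n A) : C := F (projT2 x).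

Lemma Ftot_resp x y : Eunion x y -> tot_lift x = tot_lift y.
Proof.
  assert (Hs : forall d x, tot_lift (shift d x) = tot_lift x).
  { intros d [i a]. unfold tot_lift, shift; simpl. induction d; simpl; auto. rewrite HF; auto. }
  intros [d1 [d2 H]]. rewrite <- (Hs d1 x), H. apply Hs.
Qed.

Definition colim_lift (P : Aclos n A) : C := qlift tot_lift P.

Lemma colim_lift_emb j (a : stage n A j) : colim_lift (emb a) = F a.
Proof. apply qlift_qcls; [apply Eunion_equiv|apply Ftot_resp]. Qed.

Lemma colim_lift_morph : is_morph colim_lift.
Proof.
  apply qlift_morph; auto using Eunion_equiv, Eunion_congr, Ftot_resp.
  intros [i a] s. apply HFm.
Qed.

End Lift.
End Colimit.

Section NatSystems.
Variable M : monoid.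

Lemma emap_inj (C1 C2 : Type) (h : C1 -> C2) :
  injective h -> injective (emap (M := M) (fun x : nat => x) h).
Proof.
  intros Hh [x s y t|x s c] [x' s' y' t'|x' s' c'] H; try discriminate;
    injection H; intros; subst; auto.
  f_equal. auto.
Qed.

Definition pullback (C1 C2 : Type) (h : C1 -> C2) (Sg : system M nat C2) : system M nat C1 :=
  fun q => Sg (emap (fun x => x) h q).

Lemma finite_pullback (C1 C2 : Type) (h : C1 -> C2) (Sg : system M nat C2) :
  injective h -> finite_sys Sg -> finite_sys (pullback h Sg).
Proof.
  intros Hh [l Hl].
  assert (exists l', forall q, In q l' <-> In (emap (fun x => x) h q) l) as [l' Hl'].
  { clear Hl. induction l as [|q0 l [l' IH]]; [exists nil; simpl; tauto|].
    destruct (classic (exists q, emap (fun x => x) h q = q0)) as [[q <-]|Hn].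
    - exists (q :: l'). intro q'. simpl. rewrite IH.
      split; intros [H|H]; auto; left; [congruence|exact (emap_inj Hh H)].
    - exists l'. intro q'. simpl. rewrite IH. split; auto.
      intros [H|H]; [exfalso; eauto|auto]. }
  exists l'. intro q. rewrite Hl'. apply Hl.
Qed.

Lemma occurs_in_pullback (C1 C2 : Type) (h : C1 -> C2) (Sg : system M nat C2) x :
  occurs_in x (pullback h Sg) -> occurs_in x Sg.
Proof. intros [q [Hq Ho]]. exists (emap (fun x => x) h q). split; auto. destruct q; exact Ho. Qed.

Lemma consistent_pullback (C1 C2 : preact M) (h : C1 -> C2) (Sg : system M nat C2) :
  injective h -> is_morph h -> consistent Sg -> consistent (pullback h Sg).
Proof.
  intros Hh Hhm [D [HD [e [He [Hem [f Hf]]]]]].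
  exists D. split; auto. exists (fun c => e (h c)).
  split; [intros a b H; auto|]. split; [intros a s; rewrite Hhm; auto|].
  exists f. intros q Hq. specialize (Hf _ Hq). destruct q; exact Hf.
Qed.

(** Adjoining the trivial equations [x 1 = x 1], [x < m], makes the variable set
    of a system exactly [{0, ..., m-1}]. *)
Definition pad (C : Type) (m : nat) (Sg : system M nat C) : system M nat C :=
  fun q => Sg q \/ exists x, x < m /\ q = EqVV x (mone M) x (mone M).

Lemma finite_pad (C : Type) m (Sg : system M nat C) : finite_sys Sg -> finite_sys (pad m Sg).
Proof.
  intros [l Hl]. exists (l ++ map (fun x => EqVV x (mone M) x (mone M)) (seq 0 m)).
  intro q. rewrite in_app_iff, in_map_iff, <- Hl. unfold pad.
  setoid_rewrite in_seq. split.
  - intros [H|[x [Hx ->]]]; [left; auto|right; exists x; split; auto; lia].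
  - intros [H|[x [<- Hx]]]; [left; auto|right; exists x; split; auto; lia].
Qed.

Lemma consistent_pad (C : preact M) m (Sg : system M nat C) :
  consistent Sg -> consistent (pad m Sg).
Proof.
  intros [D [HD [e [He [Hem [f Hf]]]]]]. do 2 (eexists; split; eauto).
  split; auto. exists f. intros q [Hq|[x [_ ->]]]; [apply Hf|]; auto. reflexivity.
Qed.

Lemma occurs_in_pad (C : Type) m (Sg : system M nat C) :
  (forall x, occurs_in x Sg -> x < m) -> forall x, occurs_in x (pad m Sg) <-> x < m.
Proof.
  intros Hocc x. split.
  - intros [q [[Hq|[y [Hy ->]]] Ho]]; [apply Hocc; exists q; auto|simpl in Ho; lia].
  - intro Hx. exists (EqVV x (mone M) x (mone M)). split; [right; eauto|simpl; auto].
Qed.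

Fixpoint maxvar (C : Type) (l : list (eqn M nat C)) : nat :=
  match l with
  | nil => 0
  | EqVV x _ y _ :: l => Nat.max x (Nat.max y (maxvar l))
  | EqVC x _ _ :: l => Nat.max x (maxvar l)
  end.

Lemma maxvar_spec (C : Type) (l : list (eqn M nat C)) q x :
  In q l -> occurs x q -> x <= maxvar l.
Proof.
  induction l as [|q' l IH]; simpl; [tauto|].
  intros [->|Hq] Ho; [destruct q; simpl in *; lia|].
  specialize (IH Hq Ho). destruct q'; lia.
Qed.

Definition is_gen (n : option nat) (C : preact M) (p : system M nat C * nat) : Prop :=
  finite_sys (fst p) /\ consistent (fst p) /\ admissible n (fst p) /\ occurs_in (snd p) (fst p).

End NatSystems.

Section Solve.
Variables (M : monoid) (n : option nat) (A : preact M).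
Hypothesis HA : is_act A.

Lemma constants_at_stage (Sg : system M nat (Aclos n A)) : finite_sys Sg ->
  exists N, forall x s c, Sg (EqVC x s c) -> exists b : stage n A N, c = emb b.
Proof.
  intros [l Hl].
  destruct (emb_common_stage (flat_map (fun q : eqn M nat (Aclos n A) =>
              match q with EqVC _ _ c => c :: nil | _ => nil end) l)) as [N HN].
  exists N. intros x s c Hq. apply HN, in_flat_map.
  exists (EqVC x s c). split; [apply Hl|simpl]; auto.
Qed.

Lemma emb_gen_cls_act N (g : Gen n (stage n A N)) s :
  aact (Aclos n A) (emb (j := S N) (gen_cls g (mone M))) s = emb (j := S N) (gen_cls g s).
Proof.
  rewrite <- emb_morph by auto. f_equal. simpl stage.
  rewrite gen_cls_act by apply stage_act, HA. rewrite mone_l. reflexivity.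
Qed.

(** With the constants of the system in [A^n_N], the stage [A^n_{N+1}]
    adjoins a solution. *)
Lemma Aclos_solve (m : nat) (Sg : system M nat (Aclos n A)) :
  match n with None => True | Some k => m <= k end -> 0 < m ->
  (forall x, occurs_in x Sg -> x < m) -> finite_sys Sg -> consistent Sg ->
  exists f : nat -> Aclos n A, solves (fun c => c) f Sg.
Proof.
  intros Hbd Hm Hocc Hfin Hcons.
  destruct (constants_at_stage Hfin) as [N HN].
  set (SgN := pad m (pullback (@emb M n A N) Sg)).
  assert (HG : forall x, x < m -> is_gen n (SgN, x)).
  { intros x Hx. assert (Hv : forall y, occurs_in y SgN <-> y < m)
      by (apply occurs_in_pad; intros y Hy; apply Hocc, (occurs_in_pullback Hy)).
    split; [|split; [|split]]; simpl.
    - apply finite_pad, finite_pullback; auto. apply emb_inj; auto.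
    - apply consistent_pad, consistent_pullback; auto; [apply emb_inj|apply emb_morph]; auto.
    - exists m. split; [destruct n; auto|apply Hv].
    - apply Hv; auto. }
  set (gen := fun x (H : x < m) => exist _ (SgN, x) (HG x H) : Gen n (stage n A N)).
  exists (fun x => match Compare_dec.lt_dec x m with
                   | left H => emb (j := S N) (gen_cls (gen x H) (mone M))
                   | right _ => emb (j := S N) (gen_cls (gen 0 Hm) (mone M))
                   end).
  intros q Hq.
  assert (Hx : forall x, occurs x q -> exists H : x < m,
             Compare_dec.lt_dec x m = left H).
  { intros x Hox. destruct (Compare_dec.lt_dec x m) as [H|H]; eauto.
    exfalso. apply H, Hocc. exists q; auto. }
  destruct q as [x s y t|x s c]; cbv beta iota delta [sat_eqn].
  - destruct (Hx x (or_introl eq_refl)) as [Hx1 ->].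
    destruct (Hx y (or_intror eq_refl)) as [Hy1 ->].
    rewrite !emb_gen_cls_act. f_equal.
    apply kbase_qcls; [apply stage_act, HA|]. apply kb_VV; [reflexivity|]. left; exact Hq.
  - destruct (Hx x eq_refl) as [Hx1 ->]. rewrite emb_gen_cls_act.
    destruct (HN _ _ _ Hq) as [b ->].
    rewrite <- (emb_step b). f_equal.
    apply kbase_qcls; [apply stage_act, HA|]. apply kb_VC. left; exact Hq.
Qed.

End Solve.

Section Purity.
Variable M : monoid.

Lemma A1_almost_pure (A : preact M) : is_act A -> almost_pure (A1 A).
Proof.
  intros HA Sg Hfin Hcons.
  destruct (@Aclos_solve M (Some 1) A HA 1 (sysmap (fun _ => 0) (fun c => c) Sg))
    as [f Hf]; auto.
  - intros x [q' [[q [_ ->]] Ho]]. destruct q; simpl in Ho; lia.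
  - apply finite_sysmap; auto.
  - destruct Hcons as [D [HD [e [He [Hem [f Hf]]]]]].
    do 2 (eexists; split; eauto). split; auto. exists (fun _ => f tt).
    apply solves_sysmap. intros q Hq. specialize (Hf q Hq).
    destruct q as [[] s [] t|[] s c]; exact Hf.
  - exists (fun _ => f 0). exact (proj1 (solves_sysmap _ _ _ _ _) Hf).
Qed.

Lemma Aaleph0_abs_pure (A : preact M) : is_act A -> abs_pure (Aaleph0 A).
Proof.
  intros HA Sg [l Hl] Hcons.
  apply (@Aclos_solve M None A HA (S (maxvar l))); auto with arith.
  - intros x [q [Hq Ho]]. apply Hl in Hq. pose proof (maxvar_spec Hq Ho). lia.
  - exists l; auto.
Qed.

Lemma almost_pure_inhabited (C : preact M) : is_act C -> almost_pure C -> inhabited C.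
Proof.
  intros HC Hap.
  destruct (Hap (fun q => q = EqVV tt (mone M) tt (mone M))) as [f _].
  - exists (EqVV tt (mone M) tt (mone M) :: nil). intro q; simpl; intuition.
  - exists (add_point C). split; [apply add_point_act; auto|].
    exists Some. destruct (add_point_emb C). split; [|split]; auto.
    exists (fun _ => None). intros q ->. reflexivity.
  - exact (inhabits (f tt)).
Qed.

Lemma retract_abs_pure (C C' : preact M) (i : C -> C') (r : C' -> C) :
  is_act C' -> abs_pure C' -> is_morph i -> is_morph r -> (forall c, r (i c) = c) ->
  abs_pure C.
Proof.
  intros HC' Hap Hi Hr Hri Sg Hfin Hcons.
  destruct (Hap _ (finite_sysmap (fun x => x) i Hfin) (consistent_sysmap HC' Hi Hcons))
    as [f Hf].
  exists (fun x => r (f x)). intros q Hq.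
  pose proof (solves_morph Hr (proj1 (solves_sysmap _ _ _ _ _) Hf) Hq) as H.
  destruct q; simpl in *; rewrite ?Hri in H; exact H.
Qed.

Lemma admissible1_var (C : Type) (Sg : system M nat C) :
  admissible (Some 1) Sg -> forall x, occurs_in x Sg -> x = 0.
Proof. intros [m [Hm Ho]] x Hx. apply Ho in Hx. lia. Qed.

Lemma almost_pure_solve1 (B C : preact M) (phi : B -> C) (Sg : system M nat B) :
  is_act C -> almost_pure C -> is_morph phi -> finite_sys Sg -> consistent Sg ->
  admissible (Some 1) Sg -> exists u : C, solves phi (fun _ => u) Sg.
Proof.
  intros HC Hap Hphi Hfin Hcons Hadm.
  destruct (Hap (sysmap (fun _ => tt) phi Sg)) as [fu Hfu].
  - apply finite_sysmap; auto.
  - destruct (consistent_sysmap HC Hphi Hcons) as [D [HD [e [He [Hem [f Hf]]]]]].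
    do 2 (eexists; split; eauto). split; auto. exists (fun _ => f 0).
    apply solves_sysmap. intros q Hq.
    specialize (proj1 (solves_sysmap _ _ _ _ _) Hf q Hq). apply sat_ext.
    intros x Hx. rewrite (admissible1_var Hadm (x := x)); auto. exists q; auto.
  - exists (fu tt). exact (proj1 (solves_sysmap _ _ _ _ _) Hfu).
Qed.

Section ExtendA1.
Variables (A C : preact M) (phi0 : A -> C) (c0 : C).
Hypotheses (HA : is_act A) (HC : is_act C) (Hap : almost_pure C) (Hphi0 : is_morph phi0).

Definition solution1 (B : preact M) (phi : B -> C) (Sg : system M nat B) : nat -> C :=
  fun _ => match excluded_middle_informative (exists u, solves phi (fun _ => u) Sg) with
           | left H => proj1_sig (constructive_indefinite_description _ H)
           | right _ => c0
           end.

Fixpoint ext1 (j : nat) : stage (Some 1) A j -> C :=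
  match j as j return stage (Some 1) A j -> C with
  | 0 => phi0
  | S j => step_lift (@ext1 j) (solution1 (@ext1 j))
  end.

Lemma solution1_solves j : is_morph (@ext1 j) ->
  forall g : Gen (Some 1) (stage (Some 1) A j),
  solves (@ext1 j) (solution1 (@ext1 j) (fst (proj1_sig g))) (fst (proj1_sig g)).
Proof.
  intros Hm g. unfold solution1. destruct (excluded_middle_informative _) as [H|H].
  - exact (proj2_sig (constructive_indefinite_description _ H)).
  - exfalso. apply H. destruct (proj2_sig g) as [Hf [Hc [Had _]]].
    apply almost_pure_solve1; auto.
Qed.

Lemma ext1_morph j : is_morph (@ext1 j).
Proof.
  induction j as [|j IH]; [exact Hphi0|].
  apply step_lift_morph; auto using stage_act, solution1_solves.
Qed.

Lemma ext1_step j (b : stage (Some 1) A j) : @ext1 (S j) (step_emb _ b) = ext1 b.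
Proof. apply step_lift_emb; auto using stage_act, solution1_solves, ext1_morph. Qed.

Lemma almost_pure_extend_A1 :
  exists psi : A1 A -> C, is_morph psi /\
    forall a : A, psi (emb (n := Some 1) (j := 0) a) = phi0 a.
Proof.
  exists (colim_lift ext1). split.
  - apply colim_lift_morph; auto using ext1_step, ext1_morph.
  - intro a. apply (colim_lift_emb ext1_step).
Qed.

End ExtendA1.

End Purity.

Section Inclusion.
Variables (M : monoid) (A : preact M).
Hypothesis HA : is_act A.

Lemma A1_act : is_act (A1 A).
Proof. apply Aclos_act, HA. Qed.

Lemma eqn_rel_graph (C1 C2 : Type) (R : C1 -> C2 -> Prop) (h : C1 -> C2)
  (q : eqn M nat C1) q' :
  (forall a b, R a b <-> b = h a) -> (eqn_rel R q q' <-> q' = emap (fun x => x) h q).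
Proof.
  intro HR. destruct q as [x s y t|x s c], q' as [x' s' y' t'|x' s' c']; simpl;
    split; try tauto; try discriminate.
  - intros [-> [-> [-> ->]]]; auto.
  - intro H; injection H; intros; subst; auto.
  - intros [-> [-> H]]. apply HR in H. subst; auto.
  - intro H; injection H; intros; subst. split; auto. split; auto. apply HR; auto.
Qed.

Lemma sysmap_inj (C1 C2 : Type) (h : C1 -> C2) (S1 S2 : system M nat C1) :
  injective h -> sysmap (fun x => x) h S1 = sysmap (fun x => x) h S2 -> S1 = S2.
Proof.
  intros Hh H.
  assert (Hsub : forall S S' : system M nat C1,
            sysmap (fun x => x) h S = sysmap (fun x => x) h S' ->
                   forall q, S q -> S' q).
  { intros S S' HS q Hq.
    assert (sysmap (fun x => x) h S' (emap (fun x => x) h q)) as [q2 [Hq2 He]]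
      by (rewrite <- HS; exists q; auto).
    apply (emap_inj Hh) in He. subst; auto. }
  apply functional_extensionality; intro q; apply propositional_extensionality.
  split; apply Hsub; auto.
Qed.

Definition trivial_sys (C : Type) : system M nat C := fun q => q = EqVV 0 (mone M) 0 (mone M).
Arguments trivial_sys : clear implicits.

Lemma trivial_sys_gen (C : preact M) : is_act C ->
  finite_sys (trivial_sys C) /\ consistent (trivial_sys C) /\
  admissible None (trivial_sys C) /\ occurs_in 0 (trivial_sys C).
Proof.
  intro HC. split; [|split; [|split]].
  - exists (EqVV 0 (mone M) 0 (mone M) :: nil). intro q; unfold trivial_sys; simpl; intuition.
  - exists (add_point C). split; [apply add_point_act; auto|].
    exists Some. destruct (add_point_emb C). split; [|split]; auto.
    exists (fun _ => None). intros q ->. reflexivity.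
  - exists 1. split; auto. intro x. split.
    + intros [q [-> Ho]]. simpl in Ho. lia.
    + intro Hx. exists (EqVV 0 (mone M) 0 (mone M)). split; [reflexivity|simpl; lia].
  - exists (EqVV 0 (mone M) 0 (mone M)). split; [reflexivity|simpl; auto].
Qed.

(** The generator of [Omega_aleph0] corresponding to a generator of [Omega_1],
    transported along [phi]; the trivial system is only a junk default, never
    used when [phi] is a morphism. *)
Definition gen_image j (phi : stage (Some 1) A j -> stage None A j)
  (g : Gen (Some 1) (stage (Some 1) A j)) : Gen None (stage None A j) :=
  let p := (sysmap (fun x => x) phi (fst (proj1_sig g)), snd (proj1_sig g)) in
  match excluded_middle_informative (is_gen None p) with
  | left H => exist _ p H
  | right _ => exist _ (trivial_sys _, 0) (trivial_sys_gen (stage_act None HA j))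
  end.

Lemma gen_image_val j (phi : stage (Some 1) A j -> stage None A j) g : is_morph phi ->
  proj1_sig (gen_image phi g) = (sysmap (fun x => x) phi (fst (proj1_sig g)), snd (proj1_sig g)).
Proof.
  intro Hphi. unfold gen_image. destruct (excluded_middle_informative _) as [H|H]; auto.
  exfalso. apply H. destruct (proj2_sig g) as [Hf [Hc [[m [_ Hm]] Ho]]].
  split; [|split; [|split]]; simpl.
  - apply finite_sysmap; auto.
  - apply consistent_sysmap; auto. apply stage_act; auto.
  - exists m. split; auto. intro x. rewrite occurs_in_sysmap. apply Hm.
  - apply occurs_in_sysmap. auto.
Qed.

Definition pre_image j (phi : stage (Some 1) A j -> stage None A j)
  (u : pre (Some 1) (stage (Some 1) A j)) : pre None (stage None A j) :=
  match u with
  | inl a => inl (phi a)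
  | inr (g, s) => inr (gen_image phi g, s)
  end.

Lemma pre_image_morph j (phi : stage (Some 1) A j -> stage None A j) :
  is_morph phi -> is_morph (@pre_image j phi).
Proof. intros Hphi [a|[g s]] t; simpl; rewrite ?Hphi; auto. Qed.

Lemma pre_image_cg j (phi : stage (Some 1) A j -> stage None A j) : is_morph phi -> forall u v,
  cg (@kbase M (Some 1) (stage (Some 1) A j)) u v ->
  cg (@kbase M None (stage None A j)) (@pre_image j phi u) (pre_image phi v).
Proof.
  intro Hphi. apply cg_image; auto using pre_act, stage_act, pre_image_morph.
  intros u v H. apply cg_incl; [apply pre_act, stage_act; auto|].
  destruct H as [g1 g2 s t Heq Hin|g s c Hin]; simpl.
  - apply kb_VV; rewrite !gen_image_val; simpl; auto; [rewrite Heq; auto|].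
    exists (EqVV (snd (proj1_sig g1)) s (snd (proj1_sig g2)) t). auto.
  - apply kb_VC. rewrite gen_image_val; auto. exists (EqVC (snd (proj1_sig g)) s c). auto.
Qed.

Fixpoint incl_stage (j : nat) : stage (Some 1) A j -> stage None A j :=
  match j as j return stage (Some 1) A j -> stage None A j with
  | 0 => fun a => a
  | S j => qlift (fun u => qcls _ (pre_image (@incl_stage j) u))
  end.

Lemma incl_stage_morph j : is_morph (@incl_stage j).
Proof.
  induction j as [|j IH]; [intros a s; reflexivity|].
  apply (qlift_morph (X := pre (Some 1) (stage (Some 1) A j)));
    auto using kappa_equiv, kappa_congr, stage_act.
  - intros u v H. apply qcls_eq; auto using kappa_equiv, pre_image_cg.
  - intros u s. change (stage None A (S j)) with (step None (stage None A j)).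
    rewrite step_qact, pre_image_morph; auto using stage_act.
Qed.

Lemma incl_stage_qcls j u :
  @incl_stage (S j) (qcls _ u) = qcls _ (pre_image (@incl_stage j) u).
Proof.
  apply qlift_qcls; [apply kappa_equiv|].
  intros x y H. apply qcls_eq; auto using kappa_equiv, pre_image_cg, incl_stage_morph.
Qed.

Lemma incl_stage_step j (b : stage (Some 1) A j) :
  @incl_stage (S j) (step_emb _ b) = step_emb _ (incl_stage b).
Proof. apply incl_stage_qcls. Qed.

Lemma Jpre_graph j (x : pre (Some 1) (stage (Some 1) A j)) y :
  (forall a b, @Jst M A j a b <-> b = incl_stage a) ->
  (Jpre (@Jst M A j) x y <-> y = pre_image (@incl_stage j) x).
Proof.
  intro IH.
  destruct x as [a|[g s]], y as [b|[g' s']]; simpl; split; try tauto; try discriminate.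
  - intro H. apply IH in H. subst; auto.
  - intro H. injection H; intro; subst. apply IH; auto.
  - intros [-> [Hsnd Hsys]]. do 2 f_equal. apply subset_eq.
    rewrite gen_image_val by apply incl_stage_morph.
    destruct (proj1_sig g') as [S' x'] eqn:E'. simpl in *. f_equal; auto.
    apply functional_extensionality; intro q'; apply propositional_extensionality.
    rewrite Hsys. setoid_rewrite (eqn_rel_graph _ _ IH). reflexivity.
  - intro H. injection H; intros; subst. rewrite gen_image_val by apply incl_stage_morph. simpl.
    do 2 (split; auto). intro q'. setoid_rewrite (eqn_rel_graph _ _ IH). reflexivity.
Qed.

Lemma Jst_graph j : forall a b, @Jst M A j a b <-> b = incl_stage a.
Proof.
  induction j as [|j IH]; intros a b; [simpl; split; auto|].
  cbn [Jst]. split.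
  - intros [x [y [-> [-> Hj]]]]. rewrite incl_stage_qcls. f_equal. apply Jpre_graph; auto.
  - intros ->. exists (qrep a), (pre_image (@incl_stage j) (qrep a)).
    split; [symmetry; apply qcls_qrep|]. split; [reflexivity|]. apply Jpre_graph; auto.
Qed.

Definition A1_incl : A1 A -> Aaleph0 A :=
  colim_lift (n := Some 1) (fun j a => emb (n := None) (j := j) (incl_stage a)).

Lemma A1_incl_emb j (a : stage (Some 1) A j) :
  A1_incl (emb a) = emb (n := None) (incl_stage a).
Proof.
  apply colim_lift_emb. intros i b. rewrite incl_stage_step. apply emb_step; auto.
Qed.

Lemma A1_incl_morph : is_morph A1_incl.
Proof.
  apply colim_lift_morph; auto.
  - intros i b. rewrite incl_stage_step. apply emb_step; auto.
  - intros i a s. rewrite incl_stage_morph. apply emb_morph; auto.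
Qed.

Lemma Jincl_A1_incl x : Jincl x (A1_incl x).
Proof.
  destruct (Aclos_surj x) as [i [a ->]]. exists i, a, (incl_stage a).
  split; [apply Jst_graph; reflexivity|]. split; [reflexivity|]. apply A1_incl_emb.
Qed.

Lemma A1_abs_pure_of_retract : A1_retract A -> abs_pure (A1 A).
Proof.
  intros [r [Hr Hri]].
  apply (@retract_abs_pure M (A1 A) (Aaleph0 A) A1_incl r);
    auto using Jincl_A1_incl, A1_incl_morph, Aaleph0_abs_pure.
  apply Aclos_act, HA.
Qed.

Section Retraction.
Variable d0 : A1 A.
Hypothesis Habs : abs_pure (A1 A).

Definition retr_solution j (phi : stage None A j -> A1 A)
  (Sg' : system M nat (stage None A j)) : nat -> A1 A :=
  match excluded_middle_informative
     (exists g : Gen (Some 1) (stage (Some 1) A j),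
        sysmap (fun x => x) (@incl_stage j) (fst (proj1_sig g)) = Sg') with
  | left H => fun _ => emb (n := Some 1) (j := S j)
                 (gen_cls (proj1_sig (constructive_indefinite_description _ H)) (mone M))
  | right _ => match excluded_middle_informative (exists f, solves phi f Sg') with
               | left H => proj1_sig (constructive_indefinite_description _ H)
               | right _ => fun _ => d0
               end
  end.

Fixpoint retr_stage (j : nat) : stage None A j -> A1 A :=
  match j as j return stage None A j -> A1 A with
  | 0 => fun b => emb (n := Some 1) (j := 0) b
  | S j => step_lift (@retr_stage j) (retr_solution (@retr_stage j))
  end.

Definition retr_inv j : Prop :=
  is_morph (@retr_stage j) /\ forall a, retr_stage (incl_stage a) = emb (n := Some 1) (j := j) a.

Lemma retr_inv_incl_inj j : retr_inv j -> injective (@incl_stage j).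
Proof.
  intros [_ Hv] a b H. apply (f_equal (@retr_stage j)) in H.
  rewrite !Hv in H. exact (emb_inj HA H).
Qed.

(** A generator of [Omega_1] has variable [0], so it is determined by its system. *)
Lemma gen1_eq j (g g' : Gen (Some 1) (stage (Some 1) A j)) : injective (@incl_stage j) ->
  sysmap (fun x => x) (@incl_stage j) (fst (proj1_sig g')) =
  sysmap (fun x => x) (@incl_stage j) (fst (proj1_sig g)) -> g' = g.
Proof.
  intros Hinj H. apply sysmap_inj in H; auto.
  apply subset_eq, injective_projections; auto.
  destruct (proj2_sig g) as [_ [_ [Had Hocc]]], (proj2_sig g') as [_ [_ [Had' Hocc']]].
  rewrite (admissible1_var Had Hocc), (admissible1_var Had' Hocc'). reflexivity.
Qed.

Lemma retr_solution_image j (g : Gen (Some 1) (stage (Some 1) A j)) x : retr_inv j ->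
  retr_solution (@retr_stage j) (sysmap (fun x => x) (@incl_stage j) (fst (proj1_sig g))) x
  = emb (n := Some 1) (j := S j) (gen_cls g (mone M)).
Proof.
  intro Hinv. unfold retr_solution. destruct (excluded_middle_informative _) as [H|H].
  - destruct (constructive_indefinite_description _ H) as [g' Hg']. simpl.
    rewrite (gen1_eq (retr_inv_incl_inj Hinv) Hg'). reflexivity.
  - exfalso. eauto.
Qed.

Lemma retr_solution_solves j : retr_inv j -> forall g' : Gen None (stage None A j),
  solves (@retr_stage j) (retr_solution (@retr_stage j) (fst (proj1_sig g')))
    (fst (proj1_sig g')).
Proof.
  intros [Hm Hv] g'.
  destruct (classic (exists g : Gen (Some 1) (stage (Some 1) A j),
    sysmap (fun x => x) (@incl_stage j) (fst (proj1_sig g)) = fst (proj1_sig g')))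
    as [[g Hg]|H].
  - rewrite <- Hg. apply solves_sysmap. intros q Hq.
    destruct (proj2_sig g) as [_ [_ [Had Hocc]]].
    assert (Hvar : forall x, occurs x q -> x = snd (proj1_sig g)).
    { intros x Hx. rewrite (admissible1_var Had Hocc). apply (admissible1_var Had).
      exists q; auto. }
    unfold A1. destruct q as [x s y t|x s c]; cbv beta iota delta [sat_eqn];
      rewrite !(retr_solution_image g _ (conj Hm Hv)), !emb_gen_cls_act by auto;
      [|rewrite Hv, <- (emb_step c)]; f_equal;
      apply kbase_qcls; auto using stage_act.
    + rewrite (Hvar x), (Hvar y) in Hq by (simpl; auto). apply kb_VV; auto.
    + rewrite (Hvar x) in Hq by (simpl; auto). apply kb_VC; auto.
  - unfold retr_solution. destruct (excluded_middle_informative _) as [|_]; [contradiction|].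
    destruct (excluded_middle_informative _) as [H'|H'].
    + exact (proj2_sig (constructive_indefinite_description _ H')).
    + exfalso. apply H'. destruct (proj2_sig g') as [Hf [Hc _]].
      destruct (Habs (finite_sysmap (fun x => x) (@retr_stage j) Hf)
                  (consistent_sysmap A1_act Hm Hc)) as [f Hf'].
      exists f. exact (proj1 (solves_sysmap _ _ _ _ _) Hf').
Qed.

Lemma retr_inv_all j : retr_inv j.
Proof.
  induction j as [|j Hinv]; [split; [exact (@emb_morph M (Some 1) A HA 0)|]; auto|].
  pose proof (retr_solution_solves Hinv) as Hsol. destruct Hinv as [Hm Hv].
  split; [apply step_lift_morph; auto using stage_act, A1_act|].
  intro P. pattern P. apply quot_ind. intros [a|[g s]]; rewrite incl_stage_qcls;
    change (@retr_stage (S j))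
      with (step_lift (n := None) (@retr_stage j) (retr_solution (@retr_stage j)));
    rewrite step_lift_qcls; auto using A1_act; unfold pre_eval, pre_image.
  - rewrite Hv. symmetry. apply emb_step.
  - rewrite gen_image_val by apply incl_stage_morph. cbn [fst snd].
    rewrite retr_solution_image by (split; auto). unfold A1. apply emb_gen_cls_act, HA.
Qed.

Lemma retr_stage_step j (b : stage None A j) : @retr_stage (S j) (step_emb _ b) = retr_stage b.
Proof.
  apply step_lift_emb; auto using A1_act, retr_solution_solves, retr_inv_all.
  apply retr_inv_all.
Qed.

Lemma retr_A1_retract : A1_retract A.
Proof.
  exists (colim_lift retr_stage). split.
  - apply colim_lift_morph; auto using retr_stage_step. intro j; apply retr_inv_all.
  - intros x y [i [a [b [Hj [-> ->]]]]]. apply Jst_graph in Hj. subst b.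
    transitivity (retr_stage (incl_stage a));
      [apply (colim_lift_emb retr_stage_step)|apply retr_inv_all].
Qed.

End Retraction.

Lemma A1_retract_of_abs_pure : abs_pure (A1 A) -> A1_retract A.
Proof.
  intro Habs. destruct (almost_pure_inhabited A1_act (A1_almost_pure HA)) as [d0].
  exact (retr_A1_retract d0 Habs).
Qed.

End Inclusion.

Lemma list_image (T U : Type) (R : T -> U -> Prop) (l : list T) :
  (forall t, In t l -> exists u, R t u /\ forall u', R t u' -> u' = u) ->
  exists l', forall u, (exists t, In t l /\ R t u) <-> In u l'.
Proof.
  induction l as [|t l IH]; intro H; [exists nil; intro u; simpl; firstorder|].
  destruct IH as [l' Hl']; [intros; apply H; simpl; auto|].
  destruct (H t (or_introl eq_refl)) as [u0 [Hu0 Hun]].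
  exists (u0 :: l'). intro u. simpl. rewrite <- Hl'. split.
  - intros [t' [[<-|Ht'] Hr]]; [left; symmetry; auto|right; eauto].
  - intros [<-|[t' [? ?]]]; eauto.
Qed.

Section Presentation.
Variable M : monoid.
Variables (C D : preact M) (l : list (eqn M nat C)) (e : C -> D) (f0 : nat -> D).
Hypotheses (HD : is_act D) (He : injective e) (Hem : is_morph e)
  (Hf0 : forall q, In q l -> sat_eqn e f0 q).

(* Generator [i < n_eqns] stands for the [i]-th equation of [l], generator
   [n_eqns + x] for the variable [x]; [gen_idx] is only used in range (out of
   range it returns the junk index [0]). *)
Definition n_eqns := length l.
Definition n_gens := n_eqns + S (maxvar l).

Lemma n_gens_pos : 0 < n_gens.
Proof. unfold n_gens. lia. Qed.

Definition gen_idx (i : nat) : {i : nat | i < n_gens} :=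
  match Compare_dec.lt_dec i n_gens with
  | left H => exist _ i H
  | right _ => exist _ 0 n_gens_pos
  end.

Lemma gen_idx_val i : i < n_gens -> proj1_sig (gen_idx i) = i.
Proof. intro H. unfold gen_idx. destruct (Compare_dec.lt_dec i n_gens); simpl; auto; lia. Qed.

Lemma eq_idx_lt i q : nth_error l i = Some q -> i < n_gens.
Proof.
  intro H. assert (i < n_eqns) by (apply nth_error_Some; congruence). unfold n_gens; lia.
Qed.

Lemma var_idx_lt q x : In q l -> occurs x q -> n_eqns + x < n_gens.
Proof. intros Hq Ho. pose proof (maxvar_spec Hq Ho). unfold n_gens. lia. Qed.

Definition F := free_fin M n_gens.

Lemma F_act : is_act F.
Proof.
  split; [intros [i u]|intros [i u] s t]; simpl; rewrite ?mone_r, ?massoc; reflexivity.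
Qed.

Definition eq_relation (i : nat) (q : eqn M nat C) : F * F :=
  match q with
  | EqVV x s y t => ((gen_idx (n_eqns + x), s), (gen_idx (n_eqns + y), t))
  | EqVC x s c => ((gen_idx (n_eqns + x), s), (gen_idx i, mone M))
  end.

Definition relations : list (F * F) :=
  flat_map (fun i => match nth_error l i with
                     | Some q => eq_relation i q :: nil
                     | None => nil
                     end) (seq 0 n_eqns).

Definition rel (a b : F) : Prop := In (a, b) relations.

Lemma rel_iff a b : rel a b <-> exists i q, nth_error l i = Some q /\ (a, b) = eq_relation i q.
Proof.
  unfold rel, relations. rewrite in_flat_map. split.
  - intros [i [_ Hi]]. destruct (nth_error l i) as [q|] eqn:E; simpl in Hi; [|tauto].
    destruct Hi as [Hi|[]]. eauto.
  - intros [i [q [Hi Hab]]]. exists i. split.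
    + apply in_seq. split; [lia|]. apply nth_error_Some. congruence.
    + rewrite Hi, Hab. simpl; auto.
Qed.

Definition Pres : preact M := quot_preact (cg rel).

Lemma Pres_act : is_act Pres.
Proof. apply quot_is_act; auto using cg_equiv, cg_congr, F_act. Qed.

Lemma Pres_qact (z : F) s : aact Pres (qcls _ z) s = qcls _ (aact F z s).
Proof. apply quot_act; auto using cg_equiv, cg_congr, F_act. Qed.

Lemma Pres_relation i q : nth_error l i = Some q ->
  qcls (cg rel) (fst (eq_relation i q)) = qcls _ (snd (eq_relation i q)).
Proof.
  intro H. apply qcls_eq, cg_incl; auto using cg_equiv, F_act.
  apply rel_iff. exists i, q. destruct (eq_relation i q); auto.
Qed.

Lemma Pres_gen_act (i : {i : nat | i < n_gens}) u :
  aact Pres (qcls (cg rel) ((i, mone M) : F)) u = qcls _ ((i, u) : F).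
Proof. rewrite Pres_qact. simpl. rewrite mone_l. reflexivity. Qed.

Lemma Pres_fin_pres : fin_pres Pres.
Proof.
  exists n_gens, (fun i => qcls (cg rel) ((i, mone M) : F)), relations. cbv zeta.
  assert (Hpi : forall x : F, aact Pres (qcls (cg rel) ((fst x, mone M) : F)) (snd x) = qcls _ x)
    by (intros [i u]; apply Pres_gen_act).
  split.
  - intro p. exists (qrep p). rewrite Hpi. symmetry; apply qcls_qrep.
  - intros x y. rewrite !Hpi. split; [apply qcls_rel|apply qcls_eq]; apply cg_equiv.
Qed.

Definition const_slot i := exists x s c, nth_error l i = Some (EqVC x s c).

Definition Agen_car :=
  {p : Pres | exists i u, const_slot i /\ p = qcls (cg rel) ((gen_idx i, u) : F)}.

Lemma Agen_closed (a : Agen_car) s :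
  exists i u, const_slot i /\ aact Pres (proj1_sig a) s = qcls (cg rel) ((gen_idx i, u) : F).
Proof.
  destruct a as [p [i [u [Hs ->]]]]. exists i, (mmul M u s). split; auto. apply Pres_qact.
Qed.

Definition Agen : preact M :=
  PreAct Agen_car (fun a s => exist _ (aact Pres (proj1_sig a) s) (Agen_closed a s)).

Lemma Agen_act : is_act Agen.
Proof.
  destruct Pres_act as [H1 H2].
  split; [intros [p Hp]|intros [p Hp] s t]; apply subset_eq; [apply H1|apply H2].
Qed.

Definition slot_gen i (H : const_slot i) : Agen :=
  exist _ (qcls (cg rel) ((gen_idx i, mone M) : F))
    (ex_intro _ i (ex_intro _ (mone M) (conj H eq_refl))).

Lemma Agen_fin_gen : fin_gen Agen.
Proof.
  assert (Hg : forall m, exists L : list Agen,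
            forall i (H : const_slot i), i < m -> In (slot_gen H) L).
  { induction m as [|m [L HL]]; [exists nil; intros; lia|].
    destruct (classic (const_slot m)) as [Hm|Hm]; [exists (slot_gen Hm :: L)|exists L];
      intros i H Hi; destruct (Nat.eq_dec i m) as [->|Hne]; try contradiction.
    - left. f_equal. apply proof_irrelevance.
    - right. apply HL. lia.
    - apply HL. lia. }
  destruct (Hg n_eqns) as [L HL]. exists L. intros [p [i [u [Hs ->]]]].
  exists (slot_gen Hs), u. split.
  - apply HL. destruct Hs as [x [s [c Hs]]]. apply nth_error_Some. congruence.
  - apply subset_eq. symmetry. apply Pres_gen_act.
Qed.

Lemma Agen_fg_sub_fp : fg_sub_fp Agen.
Proof.
  split; [apply Agen_fin_gen|]. exists Pres. split; [apply Pres_act|].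
  split; [apply Pres_fin_pres|]. exists (@proj1_sig _ _). split.
  - intros a b H. apply subset_eq, H.
  - intros a s; reflexivity.
Qed.

Definition gen_value (i : nat) : D :=
  match nth_error l i with
  | Some (EqVC _ _ c) => e c
  | _ => f0 (i - n_eqns)
  end.

Definition free_value (p : F) : D := aact D (gen_value (proj1_sig (fst p))) (snd p).

Lemma free_value_morph : is_morph free_value.
Proof. intros [i u] s. apply (proj2 HD). Qed.

Lemma free_value_var x : n_eqns + x < n_gens -> gen_value (proj1_sig (gen_idx (n_eqns + x))) = f0 x.
Proof.
  intro H. rewrite gen_idx_val; auto. unfold gen_value.
  rewrite (proj2 (nth_error_None l (n_eqns + x))) by (unfold n_eqns; lia).
  f_equal. lia.
Qed.

Lemma free_value_slot i x s c : nth_error l i = Some (EqVC x s c) ->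
  gen_value (proj1_sig (gen_idx i)) = e c.
Proof.
  intro Hi. rewrite gen_idx_val by exact (eq_idx_lt Hi). unfold gen_value. rewrite Hi. reflexivity.
Qed.

Lemma free_value_rel a b : rel a b -> free_value a = free_value b.
Proof.
  intro H. apply rel_iff in H. destruct H as [i [q [Hi Hab]]].
  assert (Hq : In q l) by (eapply nth_error_In; eauto).
  pose proof (Hf0 Hq) as Hs.
  destruct q as [x s y t|x s c]; simpl in Hab; injection Hab; intros; subst; unfold free_value;
    simpl; rewrite !free_value_var by (eapply var_idx_lt; eauto; simpl; auto).
  - exact Hs.
  - rewrite (free_value_slot Hi), (proj1 HD). exact Hs.
Qed.

Definition pres_value (p : Pres) : D := qlift free_value p.

Lemma pres_value_qcls z : pres_value (qcls _ z) = free_value z.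
Proof.
  apply qlift_qcls; [apply cg_equiv|].
  apply cg_ind_morph; [apply free_value_morph|apply free_value_rel].
Qed.

Lemma pres_value_morph : is_morph pres_value.
Proof.
  apply qlift_morph; auto using cg_equiv, cg_congr, F_act, free_value_morph.
  apply cg_ind_morph; [apply free_value_morph|apply free_value_rel].
Qed.

Lemma Agen_value_in_C (a : Agen) : exists c, e c = pres_value (proj1_sig a).
Proof.
  destruct a as [p [i [u [[x [s [c Hs]]] ->]]]]. simpl. rewrite pres_value_qcls.
  unfold free_value; simpl. rewrite (free_value_slot Hs). exists (aact C c u). apply Hem.
Qed.

Definition Agen_to_C (a : Agen) : C :=
  proj1_sig (constructive_indefinite_description _ (Agen_value_in_C a)).

Lemma Agen_to_C_spec a : e (Agen_to_C a) = pres_value (proj1_sig a).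
Proof. unfold Agen_to_C. destruct (constructive_indefinite_description _ _); auto. Qed.

Lemma Agen_to_C_morph : is_morph Agen_to_C.
Proof.
  intros a s. apply He. rewrite Hem, !Agen_to_C_spec. apply pres_value_morph.
Qed.

Lemma Agen_to_C_slot i (H : const_slot i) x s c :
  nth_error l i = Some (EqVC x s c) -> Agen_to_C (slot_gen H) = c.
Proof.
  intro Hi. apply He. rewrite Agen_to_C_spec. simpl. rewrite pres_value_qcls.
  unfold free_value. simpl. rewrite (free_value_slot Hi). apply (proj1 HD).
Qed.

(** The system [l] rewritten over [Agen]: the constant [c] of the [i]-th
    equation is replaced by the [i]-th generator. *)
Definition Agen_eqn (t : nat * eqn M nat C) (q : eqn M nat Agen) : Prop :=
  match snd t with
  | EqVV x s y t' => q = EqVV x s y t'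
  | EqVC x s c => exists a : Agen, q = EqVC x s a /\
                    proj1_sig a = qcls (cg rel) ((gen_idx (fst t), mone M) : F)
  end.

Definition Agen_sys (q : eqn M nat Agen) : Prop :=
  exists i q0, nth_error l i = Some q0 /\ Agen_eqn (i, q0) q.

Lemma Agen_sys_finite : finite_sys Agen_sys.
Proof.
  set (LT := flat_map (fun i => match nth_error l i with
                                | Some q => (i, q) :: nil
                                | None => nil end) (seq 0 n_eqns)).
  assert (HLT : forall i q, In (i, q) LT <-> nth_error l i = Some q).
  { intros i q. unfold LT. rewrite in_flat_map. split.
    - intros [i' [_ H]]. destruct (nth_error l i') eqn:E; simpl in H; [|tauto].
      destruct H as [H|[]]. injection H; intros; subst; auto.
    - intro H. exists i. split; [|rewrite H; simpl; auto].
      apply in_seq. split; [lia|]. apply nth_error_Some. congruence. }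
  destruct (@list_image _ _ Agen_eqn LT) as [LA HLA].
  { intros [i q0] Hin. apply HLT in Hin. destruct q0 as [x s y t|x s c]; simpl.
    - exists (EqVV x s y t). unfold Agen_eqn; simpl. auto.
    - assert (Hs : const_slot i) by (exists x, s, c; auto).
      exists (EqVC x s (slot_gen Hs)). unfold Agen_eqn; simpl.
      split; [exists (slot_gen Hs); auto|].
      intros u' [a [-> Ha]]. do 2 f_equal. apply subset_eq, Ha. }
  exists LA. intro q. rewrite <- HLA. split.
  - intros [i [q0 [Hi Hr]]]. exists (i, q0). split; auto. apply HLT; auto.
  - intros [[i q0] [Hin Hr]]. apply HLT in Hin. exists i, q0. auto.
Qed.

Lemma Agen_sys_consistent : consistent Agen_sys.
Proof.
  exists Pres. split; [apply Pres_act|]. exists (@proj1_sig _ _).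
  split; [intros a b H; apply subset_eq, H|]. split; [intros a s; reflexivity|].
  exists (fun x => qcls (cg rel) ((gen_idx (n_eqns + x), mone M) : F)).
  intros q [i [q0 [Hi Hr]]]. pose proof (Pres_relation Hi) as HR.
  destruct q0 as [x s y t|x s c]; unfold Agen_eqn in Hr; simpl in Hr, HR.
  - subst q. cbv beta iota delta [sat_eqn]. rewrite !Pres_gen_act. exact HR.
  - destruct Hr as [a [-> Ha]]. cbv beta iota delta [sat_eqn].
    rewrite Pres_gen_act. etransitivity; [exact HR|symmetry; exact Ha].
Qed.

Lemma Agen_sys_descends (B : preact M) (h : Agen -> B) (psi : B -> C) (g : nat -> B) :
  is_morph psi -> (forall a, psi (h a) = Agen_to_C a) ->
  solves (fun b => b) g (sysmap (fun x => x) h Agen_sys) ->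
  forall q, In q l -> sat_eqn (fun c => c) (fun x => psi (g x)) q.
Proof.
  intros Hpsi Hph Hg q Hq. apply (proj1 (solves_sysmap _ _ _ _ _)) in Hg.
  destruct (In_nth_error _ _ Hq) as [i Hi].
  destruct q as [x s y t|x s c]; cbv beta iota delta [sat_eqn].
  - assert (H := Hg (EqVV x s y t) (ex_intro _ i (ex_intro _ _ (conj Hi eq_refl)))).
    simpl in H. rewrite <- !Hpsi. congruence.
  - assert (Hs : const_slot i) by (exists x, s, c; auto).
    assert (H := Hg (EqVC x s (slot_gen Hs)) (ex_intro _ i (ex_intro _ _
                   (conj Hi (ex_intro _ (slot_gen Hs) (conj eq_refl eq_refl)))))).
    simpl in H. rewrite <- Hpsi, H, Hph. exact (Agen_to_C_slot Hs Hi).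
Qed.

Lemma solvable_of_A1_Agen_abs_pure : is_act C -> almost_pure C -> abs_pure (A1 Agen) ->
  exists f : nat -> C, forall q, In q l -> sat_eqn (fun c => c) f q.
Proof.
  intros HC Hap Habs. destruct (almost_pure_inhabited HC Hap) as [c0].
  destruct (almost_pure_extend_A1 c0 Agen_act HC Hap Agen_to_C_morph) as [psi [Hpsi Hpe]].
  destruct (Habs _ (finite_sysmap (fun x => x) _ Agen_sys_finite)
              (consistent_sysmap (Aclos_act _ Agen_act) (@emb_morph M (Some 1) Agen Agen_act 0)
                 Agen_sys_consistent)) as [fA HfA].
  exists (fun x => psi (fA x)). exact (Agen_sys_descends Hpsi Hpe HfA).
Qed.

End Presentation.

Lemma abs_pure_of_A1_fg_sub_fp (M : monoid) :
  (forall A : preact M, is_act A -> fg_sub_fp A -> abs_pure (A1 A)) ->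
  forall C : preact M, is_act C -> almost_pure C -> abs_pure C.
Proof.
  intros H3 C HC Hap Sg [l Hl] [D [HD [e [He [Hem [f0 Hf0]]]]]].
  assert (Hf0' : forall q, In q l -> sat_eqn e f0 q) by (intros q Hq; apply Hf0, Hl; auto).
  destruct (solvable_of_A1_Agen_abs_pure HD He Hem Hf0' HC Hap
              (H3 _ (Agen_act l) (Agen_fg_sub_fp l))) as [f Hf].
  exists f. intros q Hq. apply Hf, Hl, Hq.
Qed.

Theorem mainTheorem17 (S : monoid) :
  let c1 := forall A : preact S, is_act A -> almost_pure A -> abs_pure A in
  let c2 := forall A : preact S, is_act A -> abs_pure (A1 A) in
  let c3 := forall A : preact S, is_act A -> fg_sub_fp A -> abs_pure (A1 A) in
  let c4 := forall A : preact S, is_act A -> A1_retract A in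
  let c5 := forall A : preact S, is_act A -> fg_sub_fp A -> A1_retract A in
  (c1 <-> c2) /\ (c1 <-> c3) /\ (c1 <-> c4) /\ (c1 <-> c5).
Proof.
  intros c1 c2 c3 c4 c5.
  assert (H12 : c1 -> c2) by (intros H A HA; apply H; auto using A1_act, A1_almost_pure).
  assert (H23 : c2 -> c3) by (intros H A HA _; auto).
  assert (H31 : c3 -> c1) by exact (@abs_pure_of_A1_fg_sub_fp S).
  assert (H24 : c2 -> c4) by (intros H A HA; auto using A1_retract_of_abs_pure).
  assert (H45 : c4 -> c5) by (intros H A HA _; auto).
  assert (H53 : c5 -> c3) by (intros H A HA Hf; auto using A1_abs_pure_of_retract).
  repeat split; auto.
Qed.
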